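(* Let $k\ge1$ and let $S_1,\dots,S_k\in\mathcal{B}_A(\mathcal{H})$. Then for every positive integer $n$, $$\omega_A^{4n}\Big(\sum_{i=1}^kS_i\Big)\le\frac{k^{4n-1}}{4}\left[\Big\|\sum_{i=1}^k\Big(\big(S_i^{\sharp_A}S_i\big)^{2n}+\big(S_iS_i^{\sharp_A}\big)^{2n}\Big)\Big\|_A+2\sum_{i=1}^k\omega_A\Big(\big(S_i^{\sharp_A}S_i\big)^{n}\big(S_iS_i^{\sharp_A}\big)^{n}\Big)\right].$$
   Context: $\mathcal{H}$ is a complex Hilbert space with inner product $\langle\cdot,\cdot\rangle$, and $A$ is a fixed nonzero positive bounded operator on $\mathcal{H}$. Set $\langle x,y\rangle_A=\langle Ax,y\rangle$ and $\|x\|_A=\|A^{1/2}x\|$. $\mathcal{B}_A(\mathcal{H})$ is the set of bounded operators $T$ for which there exists a bounded $S$ with $\langle Tx,y\rangle_A=\langle x,Sy\rangle_A$ for all $x,y$ (equivalently $\mathcal{R}(T^*A)\subseteq\mathcal{R}(A)$). For $T\in\mathcal{B}_A(\mathcal{H})$, $T^{\sharp_A}=A^\dagger T^*A$ ($A^\dagger$ the Moore–Penrose inverse) is the reduced solution of $AX=T^*A$. For an operator $T$ with $\|Tx\|_A\le\lambda\|x\|_A$ for some $\lambda>0$ and all $x$, $\|T\|_A=\sup\{\|Tx\|_A: \|x\|_A=1\}$, and $\omega_A(T)=\sup\{|\langle Tx,x\rangle_A|:\|x\|_A=1\}$. *)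

From HB Require Import structures.
From mathcomp Require Import all_boot all_order all_algebra.
From mathcomp Require Import complex.
From mathcomp Require Import all_classical all_reals.
Set Implicit Arguments. Unset Strict Implicit. Unset Printing Implicit Defensive.
Import Order.TTheory GRing.Theory Num.Theory.
Local Open Scope ring_scope.
Local Open Scope classical_set_scope.

Section HilbertDefs.
Variable R : realType.
Variable H : lmodType R[i].
Variable ip : H -> H -> R[i].

Definition inner_product_axioms : Prop :=
  [/\ forall (a : R[i]) (x y z : H), ip (a *: x + y) z = a * ip x z + ip y z,
      forall x y : H, ip y x = conjc (ip x y),
      forall x : H, 0 <= ip x x
    & forall x : H, ip x x = 0 -> x = 0].

Definition hnorm (x : H) : R := Num.sqrt (complex.Re (ip x x)).

Definition hcomplete : Prop :=
  forall u : nat -> H,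
    (forall e : R, 0 < e -> exists N : nat, forall m p : nat,
        (N <= m)%N -> (N <= p)%N -> hnorm (u m - u p) < e) ->
    exists l : H, forall e : R, 0 < e -> exists N : nat, forall m : nat,
        (N <= m)%N -> hnorm (u m - l) < e.

Definition bounded_op (T : H -> H) : Prop :=
  linear T /\ exists c : R, forall x : H, hnorm (T x) <= c * hnorm x.

Definition positive_op (A : H -> H) : Prop :=
  bounded_op A /\ forall x : H, 0 <= ip (A x) x.

Variable A : H -> H.

Definition ipA (x y : H) : R[i] := ip (A x) y.
Definition normA (x : H) : R := Num.sqrt (complex.Re (ipA x x)).

Definition in_BA (T : H -> H) : Prop :=
  bounded_op T /\
  exists S : H -> H, bounded_op S /\ forall x y : H, ipA (T x) y = ipA x (S y).

(* X = T^{#_A} = A^dagger T^* A, characterized as the reduced solution of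
   A X = T^* A : X bounded, <A X x, y> = <A x, T y> for all x y
   (i.e. A X = T^* A), and R(X) contained in closure R(A) = N(A)^perp. *)
Definition is_sharpA (T X : H -> H) : Prop :=
  [/\ bounded_op X,
      forall x y : H, ip (A (X x)) y = ip (A x) (T y)
    & forall x z : H, A z = 0 -> ip (X x) z = 0].

Definition cabs (z : R[i]) : R := complex.Re `|z|.

Definition opnormA (T : H -> H) : R :=
  sup [set normA (T x) | x in [set x : H | normA x = 1]].

Definition omegaA (T : H -> H) : R :=
  sup [set cabs (ipA (T x) x) | x in [set x : H | normA x = 1]].

End HilbertDefs.

From mathcomp Require Import all_boot all_order all_algebra.
From mathcomp Require Import complex.
From mathcomp Require Import all_classical all_reals.
From mathcomp Require Import exp lra ring.
Import Order.TTheory GRing.Theory Num.Theory.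

Set Implicit Arguments.
Unset Strict Implicit.
Unset Printing Implicit Defensive.

Local Open Scope ring_scope.
Local Open Scope complex_scope.

Local Notation Re := complex.Re.
Local Notation Im := complex.Im.

(* Fix a unit vector x (for ||.||_A) and write P = S^#S, Q = SS^#.  Cauchy-Schwarz
   for the semi-inner product <.,.>_A bounds |<Sx,x>_A| by both ||Sx||_A and
   ||S^#x||_A, so |<Sx,x>_A|^4 <= <Px,x>_A <Qx,x>_A.  P and Q are positive and
   A-selfadjoint, hence j |-> <P^j x,x>_A is log-convex, which yields the
   Hoelder-McCarthy inequality <Px,x>^n <= <P^n x,x>.  Buzano's inequality and
   AM-GM then bound <P^n x,x><Q^n x,x> by (||P^n x||^2 + ||Q^n x||^2)/4
   + |<P^n Q^n x,x>|/2.  Summing over i with the power-mean inequality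
   (c_1 + ... + c_k)^(4n) <= k^(4n-1) (c_1^(4n) + ... + c_k^(4n)) and taking
   suprema gives the theorem.  The suprema on the right are over sets bounded
   above because an A-selfadjoint operator that is bounded for ||.|| is bounded
   for ||.||_A, again by log-convexity. *)

Section ComplexModulus.
Variable R : realType.
Implicit Types z w : R[i].

Lemma cabsE z : (cabs z)%:C = `|z|.
Proof. by rewrite /cabs RRe_real // normr_real. Qed.

Lemma cabs_ge0 z : 0 <= cabs z.
Proof. by rewrite -ler0c cabsE. Qed.

Lemma cabsM z w : cabs (z * w) = cabs z * cabs w.
Proof. by apply: complexI; rewrite rmorphM /= !cabsE normrM. Qed.

Lemma cabsJ z : cabs (z^*) = cabs z.
Proof. by rewrite /cabs normcJ. Qed.

Lemma cabsD z w : cabs (z + w) <= cabs z + cabs w.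
Proof. by rewrite -lecR rmorphD /= !cabsE ler_normD. Qed.

Lemma cabs_sum (I : Type) (r : seq I) (F : I -> R[i]) :
  cabs (\sum_(i <- r) F i) <= \sum_(i <- r) cabs (F i).
Proof.
elim/big_rec2: _ => [|i y s _ IH]; first by rewrite /cabs normr0.
exact: le_trans (cabsD _ _) (lerD (lexx _) IH).
Qed.

Lemma cabs_nat (m : nat) : cabs (m%:R : R[i]) = m%:R.
Proof. by apply: complexI; rewrite cabsE rmorph_nat normr_nat. Qed.

Lemma sqr_cabs z : cabs z ^+ 2 = Re z ^+ 2 + Im z ^+ 2.
Proof. by apply: complexI; rewrite rmorphXn /= cabsE add_Re2_Im2. Qed.

Lemma sqr_Re_le z : Re z ^+ 2 <= cabs z ^+ 2.
Proof. by rewrite sqr_cabs lerDl sqr_ge0. Qed.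

Lemma normRe_le_cabs z : `|Re z| <= cabs z.
Proof.
by rewrite -(ler_pXn2r (_ : 0 < 2)%N) ?nnegrE ?cabs_ge0 // real_normK ?num_real ?sqr_Re_le.
Qed.

Lemma Re_le_cabs z : Re z <= cabs z.
Proof. exact: le_trans (ler_norm _) (normRe_le_cabs z). Qed.

Lemma ReD z w : Re (z + w) = Re z + Re w.
Proof. by case: z; case: w. Qed.

Lemma Re_sum (I : Type) (r : seq I) (F : I -> R[i]) :
  Re (\sum_(i <- r) F i) = \sum_(i <- r) Re (F i).
Proof. by elim/big_rec2: _ => // i y z _ <-; rewrite ReD. Qed.

End ComplexModulus.

Section RealInequalities.
Variable R : realType.

Lemma le_mul_of_quadratic_ge0 (a b c : R) : 0 <= a -> 0 <= b -> 0 <= c ->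
  (forall t, 0 <= a - 2 * t * c + t ^+ 2 * c * b) -> c <= a * b.
Proof.
move=> a0 b0 c0 hq.
have [->|c_neq0] := eqVneq c 0; first by rewrite mulr_ge0.
have {c_neq0}c_gt0 : 0 < c by rewrite lt0r c_neq0.
have [b_eq0|b_neq0] := eqVneq b 0.
  have := hq ((a + 1) / (2 * c)); rewrite b_eq0 mulr0 addr0.
  have -> : 2 * ((a + 1) / (2 * c)) * c = a + 1 by field; rewrite lt0r_neq0.
  lra.
have {b_neq0}b_gt0 : 0 < b by rewrite lt0r b_neq0.
have := hq b^-1.
have -> : a - 2 * b^-1 * c + b^-1 ^+ 2 * c * b = (a * b - c) / b.
  by field; rewrite lt0r_neq0.
by rewrite pmulr_lge0 ?invr_gt0 // subr_ge0.
Qed.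

Section LogConvex.
Variable m : nat -> R.
Hypothesis m_ge0 : forall j, 0 <= m j.
Hypothesis m_logconvex : forall j, m j.+1 ^+ 2 <= m j * m j.+2.

Lemma logconvex_ratio j : m 1 * m j <= m 0 * m j.+1.
Proof.
elim: j => [|j IH]; first by rewrite mulrC.
have [->|mj1_neq0] := eqVneq (m j.+1) 0; first by rewrite mulr0 mulr_ge0.
have mj1_gt0 : 0 < m j.+1 by rewrite lt0r mj1_neq0 m_ge0.
rewrite -(ler_pM2l mj1_gt0).
have := ler_wpM2l (m_ge0 1) (m_logconvex j).
have := ler_wpM2r (m_ge0 j.+2) IH.
rewrite expr2; nra.
Qed.

Lemma logconvex_expr j : m 1 ^+ j * m 0 <= m 0 ^+ j * m j.
Proof.
elim: j => [|j IH]; first by rewrite !expr0.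
rewrite exprS -mulrA (exprSr (m 0)) -mulrA.
apply: le_trans (ler_wpM2l (m_ge0 1) IH) _.
rewrite mulrCA; apply: ler_wpM2l; first exact: exprn_ge0.
exact: logconvex_ratio.
Qed.

End LogConvex.

Lemma expr_bounded_le1 (r C : R) : (forall j, r ^+ j <= C) -> r <= 1.
Proof.
move=> hC; rewrite leNgt; apply/negP => r_gt1.
have bernoulli j : 1 + j%:R * (r - 1) <= r ^+ j.
  elim: j => [|j IH]; first by rewrite mul0r addr0.
  have : 0 <= j%:R * (r - 1) by rewrite mulr_ge0 ?ler0n ?subr_ge0 ?ltW.
  rewrite exprS -natr1; nra.
have C_ge0 : 0 <= C / (r - 1).
  have := hC 0%N; rewrite expr0 => C_ge1.
  by apply: divr_ge0; [exact: le_trans ler01 C_ge1 | rewrite subr_ge0 ltW].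
have := archi_boundP C_ge0; rewrite ltr_pdivrMr ?subr_gt0 //.
have := bernoulli (Num.bound (C / (r - 1))); have := hC (Num.bound (C / (r - 1))).
lra.
Qed.

Lemma chebyshev_sum (k j : nat) (c : 'I_k -> R) : (forall i, 0 <= c i) ->
  (\sum_i c i ^+ j) * (\sum_i c i) <= k%:R * \sum_i c i ^+ j.+1.
Proof.
move=> c_ge0.
have cross_ge0 : 0 <= \sum_i \sum_l (c i ^+ j - c l ^+ j) * (c i - c l).
  apply: sumr_ge0 => i _; apply: sumr_ge0 => l _.
  have [cil|/ltW cli] := leP (c i) (c l).
    by apply: mulr_le0; rewrite subr_le0 // lerXn2r ?nnegrE.
  by apply: mulr_ge0; rewrite subr_ge0 // lerXn2r ?nnegrE.
have diagonal : \sum_(i < k) \sum_(l < k) c i ^+ j.+1 = k%:R * \sum_i c i ^+ j.+1.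
  by rewrite exchange_big sumr_const card_ord mulr_natl.
have product : \sum_(i < k) \sum_(l < k) c i ^+ j * c l = (\sum_i c i ^+ j) * (\sum_i c i).
  by rewrite mulr_suml; apply: eq_bigr => i _; rewrite mulr_sumr.
have expand : \sum_i \sum_l (c i ^+ j - c l ^+ j) * (c i - c l) =
    \sum_(i < k) \sum_(l < k) c i ^+ j.+1 + \sum_(i < k) \sum_(l < k) c l ^+ j.+1
    - \sum_(i < k) \sum_(l < k) c i ^+ j * c l - \sum_(i < k) \sum_(l < k) c l ^+ j * c i.
  rewrite -big_split -!sumrB /=; apply: eq_bigr => i _.
  rewrite -big_split -!sumrB /=; apply: eq_bigr => l _.
  by rewrite !exprS; ring.
move: cross_ge0.
rewrite expand [X in _ + X - _ - _]exchange_big [X in _ - X]exchange_big /= diagonal product.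
lra.
Qed.

Lemma power_mean (k m : nat) (c : 'I_k -> R) : (forall i, 0 <= c i) ->
  (\sum_i c i) ^+ m.+1 <= k%:R ^+ m * \sum_i c i ^+ m.+1.
Proof.
move=> c_ge0; elim: m => [|m IH]; first by rewrite expr0 mul1r !expr1.
rewrite exprS mulrC.
apply: le_trans (ler_wpM2r (sumr_ge0 _ (fun i _ => c_ge0 i)) IH) _.
rewrite -mulrA exprS (mulrC k%:R) -mulrA.
by apply: ler_wpM2l; [rewrite exprn_ge0 ?ler0n | exact: chebyshev_sum].
Qed.

Lemma sup_ge0 (E : set R) : (forall y, E y -> 0 <= y) -> 0 <= sup E.
Proof.
move=> E_ge0; have [hs|/sup_out ->] := pselect (has_sup E); last by [].
have [[y Ey] _] := hs.
exact: le_trans (E_ge0 y Ey) (sup_upper_bound hs Ey).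
Qed.

Lemma sup_expr_le (E : set R) (N : nat) (M : R) : (0 < N)%N -> 0 <= M ->
  (forall y, E y -> 0 <= y /\ y ^+ N <= M) -> sup E ^+ N <= M.
Proof.
move=> N_gt0 M_ge0 hE.
have [->|/set0P E_neq0] := eqVneq E set0; first by rewrite sup0 expr0n gtn_eqF.
set t := M `^ N%:R^-1.
have tN : t ^+ N = M.
  by rewrite -powR_mulrn ?powR_ge0 // -powRrM mulVf ?pnatr_eq0 -?lt0n // powRr1.
have t_ub : ubound E t.
  move=> y /hE[y_ge0 yN].
  by rewrite -(ler_pXn2r N_gt0) ?nnegrE ?powR_ge0 // tN.
rewrite -tN lerXn2r ?nnegrE ?powR_ge0 ?ge_sup //.
by apply: sup_ge0 => y /hE[].
Qed.

End RealInequalities.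

Section SemiInnerProduct.
Variables (R : realType) (H : lmodType R[i]).

Definition semi_inner_product (f : H -> H -> R[i]) : Prop :=
  [/\ forall (a : R[i]) x y z, f (a *: x + y) z = a * f x z + f y z,
      forall x y, f y x = (f x y)^*
    & forall x, 0 <= f x x].

Definition sqnorm (f : H -> H -> R[i]) (x : H) : R := Re (f x x).

Definition seminorm (f : H -> H -> R[i]) (x : H) : R := Num.sqrt (sqnorm f x).

Variable f : H -> H -> R[i].
Hypothesis hf : semi_inner_product f.

Let f_linear a x y z : f (a *: x + y) z = a * f x z + f y z.
Proof. by case: hf. Qed.

Lemma formC x y : f y x = (f x y)^*.
Proof. by case: hf. Qed.

Lemma form_ge0 x : 0 <= f x x.
Proof. by case: hf. Qed.

Lemma form0l z : f 0 z = 0.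
Proof.
have /eqP := f_linear 1 0 0 z.
by rewrite scale1r addr0 mul1r eq_sym -subr_eq0 addrK => /eqP.
Qed.

Lemma formDl x y z : f (x + y) z = f x z + f y z.
Proof. by rewrite -[x in LHS]scale1r f_linear mul1r. Qed.

Lemma formZl a x z : f (a *: x) z = a * f x z.
Proof. by rewrite -[a *: x]addr0 f_linear form0l addr0. Qed.

Lemma formNl x z : f (- x) z = - f x z.
Proof. by rewrite -scaleN1r formZl mulN1r. Qed.

Lemma formBl x y z : f (x - y) z = f x z - f y z.
Proof. by rewrite formDl formNl. Qed.

Lemma formDr x y z : f z (x + y) = f z x + f z y.
Proof. by rewrite formC formDl rmorphD /= -!formC. Qed.

Lemma formZr a x z : f z (a *: x) = a^* * f z x.
Proof. by rewrite formC formZl rmorphM /= -formC. Qed.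

Lemma formBr x y z : f z (x - y) = f z x - f z y.
Proof. by rewrite formC formBl rmorphB /= -!formC. Qed.

Lemma form_suml (I : Type) (r : seq I) (F : I -> H) z :
  f (\sum_(i <- r) F i) z = \sum_(i <- r) f (F i) z.
Proof. by elim/big_rec2: _ => [|i y s _ <-]; rewrite ?form0l ?formDl. Qed.

Lemma formxx x : f x x = (sqnorm f x)%:C.
Proof. by rewrite /sqnorm RRe_real // ger0_real // form_ge0. Qed.

Lemma sqnorm_ge0 x : 0 <= sqnorm f x.
Proof. by rewrite -ler0c -formxx form_ge0. Qed.

Lemma seminorm_ge0 x : 0 <= seminorm f x.
Proof. exact: sqrtr_ge0. Qed.

Lemma sqr_seminorm x : seminorm f x ^+ 2 = sqnorm f x.
Proof. by rewrite sqr_sqrtr // sqnorm_ge0. Qed.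

Lemma sqnorm_eq1 x : seminorm f x = 1 -> sqnorm f x = 1.
Proof. by rewrite -sqr_seminorm => ->; rewrite expr1n. Qed.

Lemma seminorm0 : seminorm f 0 = 0.
Proof. by rewrite /seminorm /sqnorm form0l sqrtr0. Qed.

Lemma sqr_cabs_form_le x y : cabs (f x y) ^+ 2 <= sqnorm f x * sqnorm f y.
Proof.
rewrite sqr_cabs; apply: le_mul_of_quadratic_ge0; rewrite ?sqnorm_ge0 ?addr_ge0 ?sqr_ge0 //.
move=> t; have := sqnorm_ge0 (x - (t%:C * f x y) *: y).
rewrite /sqnorm formBl !formBr !formZl !formZr [f y x]formC !formxx rmorphM /=.
case: (f x y) => a b; move: (sqnorm f x) (sqnorm f y) => X Y /=.
by simpc => /= /le_trans; apply; rewrite le_eqVlt; apply/orP; left; apply/eqP; ring.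
Qed.

Lemma cabs_form_le x y : cabs (f x y) <= seminorm f x * seminorm f y.
Proof.
rewrite -(ler_pXn2r (_ : 0 < 2)%N) ?nnegrE ?cabs_ge0 ?mulr_ge0 ?seminorm_ge0 //.
by rewrite exprMn !sqr_seminorm sqr_cabs_form_le.
Qed.

Lemma Re_form_le x y : Re (f x y) <= seminorm f x * seminorm f y.
Proof. exact: le_trans (Re_le_cabs _) (cabs_form_le x y). Qed.

Lemma sqnormD x y : sqnorm f (x + y) = sqnorm f x + 2 * Re (f x y) + sqnorm f y.
Proof.
rewrite /sqnorm formDl !formDr [f y x]formC.
by case: (f x x) => ? ?; case: (f y y) => ? ?; case: (f x y) => ? ? /=; ring.
Qed.

Lemma seminormD x y : seminorm f (x + y) <= seminorm f x + seminorm f y.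
Proof.
rewrite -(ler_pXn2r (_ : 0 < 2)%N) ?nnegrE ?addr_ge0 ?seminorm_ge0 //.
rewrite sqr_seminorm sqnormD sqrrD !sqr_seminorm.
have := Re_form_le x y; lra.
Qed.

Lemma seminorm_sum (I : Type) (r : seq I) (F : I -> H) :
  seminorm f (\sum_(i <- r) F i) <= \sum_(i <- r) seminorm f (F i).
Proof.
elim/big_rec2: _ => [|i y s _ IH]; first by rewrite seminorm0.
exact: le_trans (seminormD _ _) (lerD (lexx _) IH).
Qed.

(* Cauchy-Schwarz for [a] and the reflection [r] of [b], which has the same
   seminorm. *)
Lemma buzano a b e : seminorm f e = 1 ->
  2 * cabs (f a e * f e b) <= seminorm f a * seminorm f b + cabs (f a b).
Proof.
move=> /sqnorm_eq1 e1; set r := (2%:R * f b e) *: e - b.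
have fee : f e e = 1 by rewrite formxx e1.
have feb : f e b = (f b e)^* by rewrite -formC.
have seminorm_r : seminorm f r = seminorm f b.
  rewrite /seminorm /sqnorm /r formBl !formBr !formZl !formZr fee feb.
  by rewrite rmorphM rmorph_nat /=; congr (Num.sqrt (Re _)); ring.
have far : f a r = 2%:R * (f a e * f e b) - f a b.
  by rewrite /r formBr formZr rmorphM rmorph_nat /= feb; ring.
have := cabs_form_le a r; rewrite seminorm_r far.
have := cabsD (2%:R * (f a e * f e b) - f a b) (f a b).
rewrite subrK cabsM cabs_nat; lra.
Qed.

(* AM-GM applied to Buzano's inequality. *)
Lemma Re_form_mul_le a b e : seminorm f e = 1 ->
  Re (f a e) * Re (f b e) <= (sqnorm f a + sqnorm f b) / 4 + cabs (f a b) / 2.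
Proof.
move=> e1.
have ReRe : Re (f a e) * Re (f b e) <= cabs (f a e * f e b).
  rewrite cabsM [f e b]formC cabsJ; apply: le_trans (ler_norm _) _.
  by rewrite normrM; apply: ler_pM; rewrite ?normr_ge0 ?normRe_le_cabs.
have amgm : seminorm f a * seminorm f b <= (sqnorm f a + sqnorm f b) / 2.
  rewrite -!sqr_seminorm; have := sqr_ge0 (seminorm f a - seminorm f b).
  rewrite sqrrB; lra.
have := buzano a b e1; lra.
Qed.

End SemiInnerProduct.

Lemma even_or_odd (j : nat) : exists q, j = (q + q)%N \/ j = (q + q).+1.
Proof.
elim: j => [|j [q [->|->]]]; first by exists 0%N; left.
  by exists q; right.
by exists q.+1; left; rewrite addnS addSn.
Qed.

Section SelfAdjoint.
Variables (R : realType) (H : lmodType R[i]) (f : H -> H -> R[i]).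

Definition form_selfadjoint (B : H -> H) : Prop := forall u v, f (B u) v = f u (B v).

Definition form_bounded (B : H -> H) : Prop :=
  exists2 K, 0 <= K & forall x, seminorm f (B x) <= K * seminorm f x.

Lemma iter_selfadjoint B n : form_selfadjoint B -> form_selfadjoint (iter n B).
Proof.
move=> hB; elim: n => [|n IH] u v //=.
by rewrite hB IH -iterSr.
Qed.

Lemma iter_form_shift B p q x y : form_selfadjoint B ->
  f (iter (p + q) B x) y = f (iter q B x) (iter p B y).
Proof. by move=> hB; rewrite iterD iter_selfadjoint. Qed.

Lemma seminorm_iter_le B (K : R) n x : 0 <= K ->
  (forall u, seminorm f (B u) <= K * seminorm f u) ->
  seminorm f (iter n B x) <= K ^+ n * seminorm f x.
Proof.
move=> K_ge0 hB; elim: n => [|n IH]; first by rewrite expr0 mul1r.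
rewrite exprS -mulrA; apply: le_trans (hB _) _.
exact: ler_wpM2l.
Qed.

Lemma form_bounded_comp B1 B2 :
  form_bounded B1 -> form_bounded B2 -> form_bounded (B1 \o B2).
Proof.
move=> [K1 K1_ge0 h1] [K2 K2_ge0 h2]; exists (K1 * K2); first exact: mulr_ge0.
move=> x; apply: le_trans (h1 _) _; rewrite -mulrA; exact: ler_wpM2l.
Qed.

Lemma form_bounded_iter B n : form_bounded B -> form_bounded (iter n B).
Proof.
move=> [K K_ge0 hB]; exists (K ^+ n); first exact: exprn_ge0.
by move=> x; apply: seminorm_iter_le.
Qed.

Hypothesis hf : semi_inner_product f.

Lemma form_bounded_add B1 B2 :
  form_bounded B1 -> form_bounded B2 -> form_bounded (fun x => B1 x + B2 x).
Proof.
move=> [K1 K1_ge0 h1] [K2 K2_ge0 h2]; exists (K1 + K2); first exact: addr_ge0.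
move=> x; apply: le_trans (seminormD hf _ _) _.
by rewrite mulrDl lerD.
Qed.

Lemma form_bounded_sum (k : nat) (B : 'I_k -> H -> H) :
  (forall i, form_bounded (B i)) -> form_bounded (fun x => \sum_(i < k) B i x).
Proof.
move=> hB; have /choice[K hK] : forall i, exists K, 0 <= K /\
    forall x, seminorm f (B i x) <= K * seminorm f x.
  by move=> i; have [K ? ?] := hB i; exists K.
exists (\sum_i K i); first by apply: sumr_ge0 => i _; case: (hK i).
move=> x; apply: le_trans (seminorm_sum hf _ _) _.
by rewrite mulr_suml; apply: ler_sum => i _; case: (hK i).
Qed.

Lemma semi_inner_product_selfadjoint B : linear B -> form_selfadjoint B ->
  (forall u, 0 <= f (B u) u) -> semi_inner_product (fun u v => f (B u) v).
Proof.
move=> linB hB B_ge0; split=> [a x y z|x y|x] /=.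
- by rewrite linB (formDl hf) (formZl hf).
- by rewrite hB (formC hf).
- exact: B_ge0.
Qed.

Lemma sqnorm_iter_logconvex B x j : form_selfadjoint B ->
  sqnorm f (iter j.+1 B x) ^+ 2 <= sqnorm f (iter j B x) * sqnorm f (iter j.+2 B x).
Proof.
move=> hB.
have shift : f (iter j.+2 B x) (iter j B x) = f (iter j.+1 B x) (iter j.+1 B x) :=
  iter_form_shift 1 j.+1 x (iter j B x) hB.
rewrite /sqnorm -shift mulrC; apply: le_trans (sqr_Re_le _) _.
exact: sqr_cabs_form_le.
Qed.

Section Positive.
Variable B : H -> H.
Hypotheses (linB : linear B) (hB : form_selfadjoint B) (B_ge0 : forall u, 0 <= f (B u) u).

Let g := fun u v => f (B u) v.
Let hg : semi_inner_product g := semi_inner_product_selfadjoint linB hB B_ge0.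

Let Re_form_iter_split x p q :
  Re (f (iter (p + q) B x) x) = Re (f (iter q B x) (iter p B x)).
Proof. by rewrite iter_form_shift. Qed.

Lemma Re_form_iter_ge0 x j : 0 <= Re (f (iter j B x) x).
Proof.
have [q [->|->]] := even_or_odd j; rewrite ?Re_form_iter_split -?addnS ?Re_form_iter_split.
  exact: sqnorm_ge0 hf _.
exact: sqnorm_ge0 hg _.
Qed.

(* The even terms are [sqnorm f] of [B^q x], the odd ones [sqnorm g], and
   Cauchy-Schwarz for [f], resp. [g], bounds the terms in between. *)
Lemma Re_form_iter_logconvex x j :
  Re (f (iter j.+1 B x) x) ^+ 2 <= Re (f (iter j B x) x) * Re (f (iter j.+2 B x) x).
Proof.
have [q [->|->]] := even_or_odd j.
  have -> : (q + q).+2 = (q.+1 + q.+1)%N by rewrite addSn addnS.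
  rewrite -addnS !Re_form_iter_split mulrC.
  exact: le_trans (sqr_Re_le _) (sqr_cabs_form_le hf _ _).
have -> : (q + q).+3 = (q.+1 + q.+2)%N by rewrite addSn !addnS.
rewrite -!addnS !Re_form_iter_split mulrC.
exact: le_trans (sqr_Re_le _) (sqr_cabs_form_le hg _ _).
Qed.

Lemma holder_mccarthy x n : seminorm f x = 1 ->
  Re (f (B x) x) ^+ n <= Re (f (iter n B x) x).
Proof.
move=> /(sqnorm_eq1 hf) x1.
have := logconvex_expr (m := fun j => Re (f (iter j B x) x))
  (Re_form_iter_ge0 x) (Re_form_iter_logconvex x) n.
by rewrite /= -/(sqnorm f x) x1 expr1n mulr1 mul1r.
Qed.

End Positive.

(* If b_j = sqnorm f (B^j x) then b_1^j b_0 <= b_0^j b_j by log-convexity, so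
   geometric growth of the b_j caps the ratio b_1 / b_0. *)
Lemma sqnorm_le_of_iter_bound B x (C K : R) : form_selfadjoint B -> 0 <= K ->
  (forall j, sqnorm f (iter j B x) <= C * K ^+ j) -> sqnorm f (B x) <= K * sqnorm f x.
Proof.
move=> hB K_ge0 hC.
pose b j := sqnorm f (iter j B x).
have b_ge0 j : 0 <= b j := sqnorm_ge0 hf _.
have hb := logconvex_expr b_ge0 (fun j => sqnorm_iter_logconvex x j hB).
rewrite -[sqnorm f (B x)]/(b 1%N) -[sqnorm f x]/(b 0%N).
have [b0_eq0|b0_neq0] := eqVneq (b 0%N) 0.
  have b1_sqr : b 1%N ^+ 2 <= b 0%N * b 2%N := sqnorm_iter_logconvex x 0 hB.
  rewrite b0_eq0 mul0r in b1_sqr; rewrite b0_eq0 mulr0.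
  suff : b 1%N ^+ 2 == 0 by rewrite sqrf_eq0 => /eqP ->.
  by rewrite eq_le b1_sqr sqr_ge0.
have b0_gt0 : 0 < b 0%N by rewrite lt0r b0_neq0 b_ge0.
have [K_eq0|K_neq0] := eqVneq K 0.
  by have := hC 1%N; rewrite K_eq0 expr1 mulr0 mul0r.
have Kb0_gt0 : 0 < K * b 0%N by rewrite mulr_gt0 // lt0r K_neq0.
rewrite -[K * b 0%N]mul1r -ler_pdivrMr //.
apply: (@expr_bounded_le1 _ _ (C / b 0%N)) => j.
rewrite expr_div_n ler_pdivrMr ?exprn_gt0 // -(ler_pM2r b0_gt0).
apply: le_trans (hb j) _.
have -> : C / b 0%N * (K * b 0%N) ^+ j * b 0%N = b 0%N ^+ j * (C * K ^+ j).
  by rewrite exprMn; field; rewrite lt0r_neq0.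
by apply: ler_wpM2l; [exact: exprn_ge0 | exact: hC].
Qed.

End SelfAdjoint.

Lemma form_bounded_selfadjoint (R : realType) (H : lmodType R[i])
    (f g : H -> H -> R[i]) (c : R) (B : H -> H) :
  semi_inner_product f -> semi_inner_product g -> 0 <= c ->
  (forall u, sqnorm f u <= c * sqnorm g u) ->
  form_selfadjoint f B -> form_bounded g B -> form_bounded f B.
Proof.
move=> hf hg c_ge0 f_le_g hB [K K_ge0 gB]; exists K => // x.
have iter_bound j : sqnorm f (iter j B x) <= c * sqnorm g x * (K ^+ 2) ^+ j.
  apply: le_trans (f_le_g _) _; rewrite -mulrA; apply: ler_wpM2l => //.
  rewrite -!(sqr_seminorm hg) -exprM mulnC exprM -exprMn mulrC.
  apply: lerXn2r; rewrite ?nnegrE ?mulr_ge0 ?exprn_ge0 ?seminorm_ge0 //.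
  exact: seminorm_iter_le.
have := sqnorm_le_of_iter_bound hf hB (exprn_ge0 2 K_ge0) iter_bound.
rewrite -!(sqr_seminorm hf) -exprMn.
by rewrite ler_pXn2r ?nnegrE ?mulr_ge0 ?seminorm_ge0.
Qed.

Section SharpPair.
Variables (R : realType) (H : lmodType R[i]) (f : H -> H -> R[i]) (S T : H -> H).
Hypotheses (hf : semi_inner_product f) (linS : linear S) (linT : linear T).
Hypothesis adjT : forall u v, f (T u) v = f u (S v).

Lemma adjS u v : f (S u) v = f u (T v).
Proof. by rewrite (formC hf) -adjT -(formC hf). Qed.

Lemma selfadjoint_sharpS : form_selfadjoint f (T \o S).
Proof. by move=> u v /=; rewrite adjT adjS. Qed.

Lemma selfadjoint_Ssharp : form_selfadjoint f (S \o T).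
Proof. by move=> u v /=; rewrite adjS adjT. Qed.

Let P := T \o S.
Let Q := S \o T.

Let linP : linear P.
Proof. by move=> a u v; rewrite /P /= linS linT. Qed.

Let linQ : linear Q.
Proof. by move=> a u v; rewrite /Q /= linT linS. Qed.

Let P_ge0 u : 0 <= f (P u) u.
Proof. by rewrite /P /= adjT form_ge0. Qed.

Let Q_ge0 u : 0 <= f (Q u) u.
Proof. by rewrite /Q /= adjS form_ge0. Qed.

Let ReP x : Re (f (P x) x) = sqnorm f (S x).
Proof. by rewrite /P /= adjT. Qed.

Let ReQ x : Re (f (Q x) x) = sqnorm f (T x).
Proof. by rewrite /Q /= adjS. Qed.

Lemma cabs_form_expr4_le x : seminorm f x = 1 ->
  cabs (f (S x) x) ^+ 4 <= Re (f (P x) x) * Re (f (Q x) x).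
Proof.
move=> x1.
have le_S : cabs (f (S x) x) <= seminorm f (S x).
  by have := cabs_form_le hf (S x) x; rewrite x1 mulr1.
have le_T : cabs (f (S x) x) <= seminorm f (T x).
  by have := cabs_form_le hf (T x) x; rewrite x1 mulr1 (formC hf) cabsJ -adjS.
rewrite ReP ReQ -!(sqr_seminorm hf) -exprMn (_ : 4 = 2 * 2)%N // exprM.
apply: lerXn2r; rewrite ?nnegrE ?exprn_ge0 ?mulr_ge0 ?cabs_ge0 ?seminorm_ge0 //.
by rewrite expr2 ler_pM ?cabs_ge0.
Qed.

Lemma cabs_form_expr4n_le n x : seminorm f x = 1 ->
  cabs (f (S x) x) ^+ (4 * n) <=
    Re (f (iter (2 * n) P x + iter (2 * n) Q x) x) / 4
    + cabs (f (iter n P (iter n Q x)) x) / 2.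
Proof.
move=> x1.
have Pn := holder_mccarthy hf linP selfadjoint_sharpS P_ge0 n x1.
have Qn := holder_mccarthy hf linQ selfadjoint_Ssharp Q_ge0 n x1.
have power_le : cabs (f (S x) x) ^+ (4 * n) <=
    Re (f (iter n P x) x) * Re (f (iter n Q x) x).
  rewrite exprM; apply: le_trans (_ : (Re (f (P x) x) * Re (f (Q x) x)) ^+ n <= _).
    apply: lerXn2r; last exact: cabs_form_expr4_le.
      by rewrite nnegrE exprn_ge0 ?cabs_ge0.
    by rewrite nnegrE ReP ReQ mulr_ge0 ?sqnorm_ge0.
  rewrite exprMn; apply: ler_pM => //; apply: exprn_ge0; rewrite ?ReP ?ReQ; exact: sqnorm_ge0.
apply: le_trans power_le (le_trans (Re_form_mul_le hf _ _ x1) _).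
have double B : form_selfadjoint f B -> sqnorm f (iter n B x) = Re (f (iter (2 * n) B x) x).
  by move=> hB; rewrite /sqnorm mul2n -addnn iter_form_shift.
rewrite (formDl hf) ReD (double _ selfadjoint_sharpS) (double _ selfadjoint_Ssharp).
by rewrite [f (iter n P x) _](iter_selfadjoint _ selfadjoint_sharpS) [f x _](formC hf) cabsJ.
Qed.

End SharpPair.

Lemma cabs_form_sum_expr4n_le (R : realType) (H : lmodType R[i]) (f : H -> H -> R[i])
    (k n : nat) (S T : 'I_k -> H -> H) (x : H) :
  semi_inner_product f -> (0 < n)%N ->
  (forall i, linear (S i)) -> (forall i, linear (T i)) ->
  (forall i u v, f (T i u) v = f u (S i v)) -> seminorm f x = 1 ->
  cabs (f (\sum_(i < k) S i x) x) ^+ (4 * n) <=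
    k%:R ^+ (4 * n - 1) / 4 *
    (Re (f (\sum_(i < k) (iter (2 * n) (T i \o S i) x + iter (2 * n) (S i \o T i) x)) x)
     + 2 * \sum_(i < k) cabs (f (iter n (T i \o S i) (iter n (S i \o T i) x)) x)).
Proof.
move=> hf n_gt0 linS linT adjT x1.
have e4n : (4 * n = (4 * n - 1).+1)%N by rewrite subn1 prednK // muln_gt0.
rewrite (form_suml hf).
have c_ge0 i : 0 <= cabs (f (S i x) x) := cabs_ge0 _.
apply: le_trans (lerXn2r _ (cabs_ge0 _) (sumr_ge0 _ (fun i _ => c_ge0 i)) (cabs_sum _ _)) _.
rewrite [in X in X <= _]e4n; apply: le_trans (power_mean _ c_ge0) _.
rewrite -e4n -mulrA; apply: ler_wpM2l; first by rewrite exprn_ge0 ?ler0n.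
rewrite (form_suml hf) Re_sum.
have -> : 4^-1 * (\sum_i Re (f (iter (2 * n) (T i \o S i) x + iter (2 * n) (S i \o T i) x) x)
    + 2 * \sum_i cabs (f (iter n (T i \o S i) (iter n (S i \o T i) x)) x)) =
  \sum_i (Re (f (iter (2 * n) (T i \o S i) x + iter (2 * n) (S i \o T i) x) x) / 4
    + cabs (f (iter n (T i \o S i) (iter n (S i \o T i) x)) x) / 2).
  by rewrite big_split /= -!mulr_suml; field.
by apply: ler_sum => i _; exact: cabs_form_expr4n_le.
Qed.

Section OperatorsOnSemiHilbert.
Variables (R : realType) (H : lmodType R[i]) (ip : H -> H -> R[i]) (A : H -> H).

Lemma form_bounded_of_bounded_op T : bounded_op ip T -> form_bounded ip T.
Proof.
move=> [_ [c hc]]; exists (Num.max c 0); first by rewrite le_max lexx orbT.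
move=> x; apply: le_trans (hc x) _.
by apply: ler_wpM2r; [exact: sqrtr_ge0 | rewrite le_max lexx].
Qed.

Let normA_seminorm x : normA ip A x = seminorm (ipA ip A) x.
Proof. by []. Qed.

Lemma opnormA_ge0 T : 0 <= opnormA ip A T.
Proof. by apply: sup_ge0 => _ [y _ <-]; exact: sqrtr_ge0. Qed.

Lemma omegaA_ge0 T : 0 <= omegaA ip A T.
Proof. by apply: sup_ge0 => _ [y _ <-]; exact: cabs_ge0. Qed.

(* [sup] of a set that is not bounded above is 0, whence the boundedness
   hypothesis. *)
Lemma opnormA_ge T x : form_bounded (ipA ip A) T -> normA ip A x = 1 ->
  normA ip A (T x) <= opnormA ip A T.
Proof.
move=> [K _ hK] x1; apply: ub_le_sup; last by exists x.
by exists K => _ [y y1 <-]; move: (hK y); rewrite -!normA_seminorm y1 mulr1.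
Qed.

Hypotheses (hip : inner_product_axioms ip) (hA : positive_op ip A).

Lemma semi_inner_product_ip : semi_inner_product ip.
Proof. by case: hip. Qed.

(* Polarization: a positive operator on a complex space is selfadjoint. *)
Lemma ipA_hermitian x y : ipA ip A y x = (ipA ip A x y)^*.
Proof.
have hf := semi_inner_product_ip.
have [[linA _] A_ge0] := hA.
have AD u v : A (u + v) = A u + A v by have := linA 1 u v; rewrite !scale1r.
have AZ a u : A (a *: u) = a *: A u.
  have A0 : A 0 = 0 by have /eqP := AD 0 0; rewrite addr0 eq_sym -subr_eq0 addrK => /eqP.
  by rewrite -[a *: u]addr0 linA A0 addr0.
have := A_ge0 (x + y); have := A_ge0 (x + 'i *: y).
rewrite !AD AZ !(formDl hf) !(formDr hf) !(formZl hf) !(formZr hf).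
have := A_ge0 x; have := A_ge0 y; rewrite /ipA.
case: (ip (A x) x) => a1 b1; case: (ip (A y) y) => a2 b2.
case: (ip (A x) y) => a b; case: (ip (A y) x) => c d.
simpc => /andP[/eqP e1 _] /andP[/eqP e2 _] /andP[/eqP e3 _] /andP[/eqP e4 _].
by apply/eqP; rewrite eq_complex /=; apply/andP; split; apply/eqP; lra.
Qed.

Lemma semi_inner_product_ipA : semi_inner_product (ipA ip A).
Proof.
have [[linA _] A_ge0] := hA.
split=> [a x y z|x y|//]; last exact: ipA_hermitian.
by rewrite /ipA linA (formDl semi_inner_product_ip) (formZl semi_inner_product_ip).
Qed.

Lemma sqnorm_ipA_le : exists2 c, 0 <= c & forall u, sqnorm (ipA ip A) u <= c * sqnorm ip u.
Proof.
have [K K_ge0 hK] := form_bounded_of_bounded_op hA.1.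
exists K => // u; apply: le_trans (Re_form_le semi_inner_product_ip (A u) u) _.
rewrite -(sqr_seminorm semi_inner_product_ip) expr2 mulrA.
by apply: ler_wpM2r; [exact: seminorm_ge0 | exact: hK].
Qed.

Lemma form_bounded_sharp S T : in_BA ip A S -> is_sharpA ip A S T ->
  form_bounded (ipA ip A) (T \o S) /\ form_bounded (ipA ip A) (S \o T).
Proof.
move=> [bS _] [bT adjT _].
have hf := semi_inner_product_ipA.
have [c c_ge0 hc] := sqnorm_ipA_le.
have [bS' bT'] := (form_bounded_of_bounded_op bS, form_bounded_of_bounded_op bT).
split; apply: (form_bounded_selfadjoint hf semi_inner_product_ip c_ge0 hc).
- exact: selfadjoint_sharpS hf adjT.
- exact: form_bounded_comp.
- exact: selfadjoint_Ssharp hf adjT.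
- exact: form_bounded_comp.
Qed.

Lemma omegaA_ge T x : form_bounded (ipA ip A) T -> normA ip A x = 1 ->
  cabs (ipA ip A (T x) x) <= omegaA ip A T.
Proof.
move=> [K _ hK] x1; apply: ub_le_sup; last by exists x.
exists K => _ [y y1 <-]; apply: le_trans (cabs_form_le semi_inner_product_ipA _ _) _.
by move: (hK y); rewrite -!normA_seminorm y1 !mulr1.
Qed.

End OperatorsOnSemiHilbert.

Theorem theorem3p10 (R : realType) (H : lmodType R[i]) (ip : H -> H -> R[i])
  (Hip : inner_product_axioms ip) (Hcompl : hcomplete ip)
  (A : H -> H) (HA : positive_op ip A) (HA0 : exists x : H, A x != 0)
  (k : nat) (Hk : (1 <= k)%N)
  (S Ssh : 'I_k -> H -> H)
  (HS : forall i : 'I_k, in_BA ip A (S i))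
  (HSsh : forall i : 'I_k, is_sharpA ip A (S i) (Ssh i))
  (n : nat) (Hn : (0 < n)%N) :
  omegaA ip A (fun x => \sum_(i < k) S i x) ^+ (4 * n)
  <= (k%:R ^+ (4 * n - 1) / 4) *
     (opnormA ip A (fun x => \sum_(i < k)
          (iter (2 * n) (Ssh i \o S i) x + iter (2 * n) (S i \o Ssh i) x))
      + 2 * \sum_(i < k)
          omegaA ip A (fun x => iter n (Ssh i \o S i) (iter n (S i \o Ssh i) x))).
Proof.
have hf := semi_inner_product_ipA Hip HA.
have linS i : linear (S i) by case: (HS i) => [[]].
have linT i : linear (Ssh i) by case: (HSsh i) => [[]].
have adjT i u v : ipA ip A (Ssh i u) v = ipA ip A u (S i v).
  by case: (HSsh i) => _ adj _; exact: adj.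
have bP i := (form_bounded_sharp Hip HA (HS i) (HSsh i)).1.
have bQ i := (form_bounded_sharp Hip HA (HS i) (HSsh i)).2.
have coef_ge0 : 0 <= k%:R ^+ (4 * n - 1) / 4 :> R by rewrite divr_ge0 ?exprn_ge0.
apply: sup_expr_le; first by rewrite muln_gt0.
  apply: mulr_ge0 => //; apply: addr_ge0; first exact: opnormA_ge0.
  by rewrite mulr_ge0 // sumr_ge0 // => i _; exact: omegaA_ge0.
move=> _ [x x1 <-]; split; first exact: cabs_ge0.
apply: le_trans (cabs_form_sum_expr4n_le hf Hn linS linT adjT x1) _.
apply: ler_wpM2l => //.
apply: lerD.
  apply: le_trans (Re_form_le hf _ _) _; rewrite [seminorm _ x]x1 mulr1.
  apply: opnormA_ge x1; apply: (form_bounded_sum hf) => i.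
  by apply: (form_bounded_add hf); apply: form_bounded_iter.
apply: ler_wpM2l => //; apply: ler_sum => i _; apply: (omegaA_ge Hip HA _ x1).
exact: form_bounded_comp (form_bounded_iter _ (bP i)) (form_bounded_iter _ (bQ i)).
Qed.
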